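(* For any constant $\gamma>0$, the map $\mathrm{Prox}_p:\mathbb{R}^n\to\mathbb{R}^n$ is $\gamma$-order semismooth on $\mathbb{R}^n$ with respect to the multifunction $\mathcal M$; that is, $\mathrm{Prox}_p$ is directionally differentiable everywhere, and for every $x\in\mathbb{R}^n$, $\mathrm{Prox}_p(x+\Delta x)-\mathrm{Prox}_p(x)-V\Delta x=O(\|\Delta x\|^{1+\gamma})$ as $\Delta x\to0$, uniformly over $V\in\mathcal M(x+\Delta x)$.
   Context: $\beta,\rho>0$; $p(x):=\beta\|x\|_1+\rho\sum_{1\le i<j\le n}|x_i-x_j|$; $\mathrm{Prox}_p(y):=\operatorname{argmin}_x\{\tfrac12\|x-y\|^2+p(x)\}$. $S_\rho(y):=\operatorname{argmin}_x\{\tfrac12\|x-y\|^2+\rho\sum_{i<j}|x_i-x_j|\}$. $w_k=n-2k+1$. $\mathcal D:=\{x: x_1\ge\cdots\ge x_n\}$, $\Pi_{\mathcal D}$ the Euclidean projection. $B\in\mathbb{R}^{(n-1)\times n}$ with $Bx=(x_1-x_2,\dots,x_{n-1}-x_n)^T$. For each $y$, $P_y$ is a fixed permutation matrix with $P_yy$ non-increasing. For $v\in\mathbb{R}^n$: $\mathcal M_{\mathcal D}(v)$ is the set of $\lambda\in\mathbb{R}^{n-1}$ with $\Pi_{\mathcal D}(v)-v+B^T\lambda=0$, $B\Pi_{\mathcal D}(v)\ge0$, $\lambda\le0$, $\lambda^TB\Pi_{\mathcal D}(v)=0$; $\mathcal I_{\mathcal D}(v):=\{i: B_i\Pi_{\mathcal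 D}(v)=0\}$; $\mathcal K_{\mathcal D}(v):=\{K:\exists\lambda\in\mathcal M_{\mathcal D}(v),\ \mathrm{supp}(\lambda)\subseteq K\subseteq\mathcal I_{\mathcal D}(v),\ B_K\text{ full row rank}\}$; $\mathcal Q_{\mathcal D}(v):=\{I_n-B_K^T(B_KB_K^T)^{-1}B_K:K\in\mathcal K_{\mathcal D}(v)\}$; $\mathcal Q_{S_\rho}(y):=\{P_y^T\widehat QP_y:\widehat Q\in\mathcal Q_{\mathcal D}(P_yy-\rho w)\}$. $\partial_B\mathrm{Prox}_{\beta\|\cdot\|_1}(\eta)$ is the set of $\mathrm{Diag}(q)$ with $q_i=0$ if $|\eta_i|<\beta$, $q_i\in\{0,1\}$ if $|\eta_i|=\beta$, $q_i=1$ otherwise. $\mathcal M(y):=\{M \text{ symmetric}: M=\Theta Q,\ \Theta\in\partial_B\mathrm{Prox}_{\beta\|\cdot\|_1}(S_\rho(y)),\ Q\in\mathcal Q_{S_\rho}(y)\}$. *)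

(* Stdlib (classical reals R).  Vectors of R^m are represented as
   functions nat -> R of which only the entries 0..m-1 are meaningful;
   matrices as nat -> nat -> R.  All indices are 0-based. *)
From Stdlib Require Import Reals Lra List Arith.
Open Scope R_scope.

Definition vec := nat -> R.
Definition mat := nat -> nat -> R.

Fixpoint rsum (m : nat) (f : nat -> R) : R :=
  match m with
  | O => 0
  | S k => rsum k f + f k
  end.

Definition vadd (x y : vec) : vec := fun i => x i + y i.
Definition vsub (x y : vec) : vec := fun i => x i - y i.
Definition vscal (t : R) (x : vec) : vec := fun i => t * x i.

Definition norm2 (m : nat) (x : vec) : R := sqrt (rsum m (fun i => (x i) ^ 2)).
Definition sqnorm (m : nat) (x : vec) : R := rsum m (fun i => (x i) ^ 2).

Definition mvmul (k : nat) (A : mat) (x : vec) : vec :=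
  fun i => rsum k (fun j => A i j * x j).
Definition mmul (k : nat) (A B : mat) : mat :=
  fun i j => rsum k (fun l => A i l * B l j).
Definition mtr (A : mat) : mat := fun i j => A j i.
Definition idm : mat := fun i j => if Nat.eqb i j then 1 else 0.
Definition msub (A B : mat) : mat := fun i j => A i j - B i j.
Definition diagm (q : vec) : mat := fun i j => if Nat.eqb i j then q i else 0.

Definition meq (r c : nat) (A B : mat) : Prop :=
  forall i j, (i < r)%nat -> (j < c)%nat -> A i j = B i j.

Definition l1norm (n : nat) (x : vec) : R := rsum n (fun i => Rabs (x i)).
Definition pairsum (n : nat) (x : vec) : R :=
  rsum n (fun j => rsum j (fun i => Rabs (x i - x j))).
Definition pen (n : nat) (beta rho : R) (x : vec) : R :=
  beta * l1norm n x + rho * pairsum n x.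

Definition is_argmin_on (n : nat) (C : vec -> Prop) (f : vec -> R) (y x : vec) : Prop :=
  C x /\ forall z, C z ->
    / 2 * sqnorm n (vsub x y) + f x <= / 2 * sqnorm n (vsub z y) + f z.

Definition is_prox_map (n : nat) (f : vec -> R) (prox : vec -> vec) : Prop :=
  forall y, is_argmin_on n (fun _ => True) f y (prox y).

Definition inD (n : nat) (x : vec) : Prop :=
  forall i, (S i < n)%nat -> x (S i) <= x i.
Definition is_proj_D (n : nat) (proj : vec -> vec) : Prop :=
  forall v, is_argmin_on n (inD n) (fun _ => 0) v (proj v).

(* B in R^{(n-1) x n}, (Bx)_i = x_i - x_{i+1} *)
Definition Bm : mat := fun i j =>
  if Nat.eqb j i then 1 else if Nat.eqb j (S i) then -1 else 0.

(* w_k = n - 2k + 1 (1-based k), i.e. n - 2k - 1 for 0-based k *)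
Definition wvec (n : nat) : vec := fun k => INR n - 2 * INR k - 1.

Definition is_perm (n : nat) (sigma : nat -> nat) : Prop :=
  (forall i, (i < n)%nat -> (sigma i < n)%nat) /\
  (forall i j, (i < n)%nat -> (j < n)%nat -> sigma i = sigma j -> i = j).
Definition permm (sigma : nat -> nat) : mat :=
  fun i j => if Nat.eqb j (sigma i) then 1 else 0.
Definition is_sort_perm_sel (n : nat) (Psel : vec -> nat -> nat) : Prop :=
  forall y, is_perm n (Psel y) /\ inD n (mvmul n (permm (Psel y)) y).

Definition M_D (n : nat) (proj : vec -> vec) (v : vec) (lam : vec) : Prop :=
  let pv := proj v in
  (forall j, (j < n)%nat ->
     pv j - v j + mvmul (n - 1) (mtr Bm) lam j = 0) /\
  (forall i, (i < n - 1)%nat -> mvmul n Bm pv i >= 0) /\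
  (forall i, (i < n - 1)%nat -> lam i <= 0) /\
  rsum (n - 1) (fun i => lam i * mvmul n Bm pv i) = 0.

Definition I_D (n : nat) (proj : vec -> vec) (v : vec) (i : nat) : Prop :=
  (i < n - 1)%nat /\ mvmul n Bm (proj v) i = 0.

Definition BK (K : list nat) : mat := fun r j => Bm (nth r K O) j.

Definition full_row_rank (m n : nat) (A : mat) : Prop :=
  forall c : vec,
    (forall j, (j < n)%nat -> rsum m (fun r => c r * A r j) = 0) ->
    forall r, (r < m)%nat -> c r = 0.

Definition K_D (n : nat) (proj : vec -> vec) (v : vec) (K : list nat) : Prop :=
  NoDup K /\
  (exists lam, M_D n proj v lam /\
     forall i, (i < n - 1)%nat -> lam i <> 0 -> In i K) /\
  (forall i, In i K -> I_D n proj v i) /\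
  full_row_rank (length K) n (BK K).

Definition is_inverse (m : nat) (A W : mat) : Prop :=
  meq m m (mmul m W A) idm /\ meq m m (mmul m A W) idm.

Definition Q_D (n : nat) (proj : vec -> vec) (v : vec) (Q : mat) : Prop :=
  exists K, K_D n proj v K /\
    exists W, is_inverse (length K) (mmul n (BK K) (mtr (BK K))) W /\
      meq n n Q
        (msub idm (mmul (length K) (mtr (BK K)) (mmul (length K) W (BK K)))).

Definition Q_S (n : nat) (rho : R) (proj : vec -> vec) (Psel : vec -> nat -> nat)
    (y : vec) (Q : mat) : Prop :=
  let P := permm (Psel y) in
  exists Qh, Q_D n proj (vsub (mvmul n P y) (vscal rho (wvec n))) Qh /\
    meq n n Q (mmul n (mtr P) (mmul n Qh P)).

Definition dB_prox_l1 (n : nat) (beta : R) (eta : vec) (Theta : mat) : Prop :=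
  exists q : vec,
    (forall i, (i < n)%nat ->
       (Rabs (eta i) < beta -> q i = 0) /\
       (Rabs (eta i) = beta -> q i = 0 \/ q i = 1) /\
       (Rabs (eta i) > beta -> q i = 1)) /\
    meq n n Theta (diagm q).

Definition Mset (n : nat) (beta rho : R) (Srho : vec -> vec) (proj : vec -> vec)
    (Psel : vec -> nat -> nat) (y : vec) (M : mat) : Prop :=
  (forall i j, (i < n)%nat -> (j < n)%nat -> M i j = M j i) /\
  exists Theta Q,
    dB_prox_l1 n beta (Srho y) Theta /\
    Q_S n rho proj Psel y Q /\
    meq n n M (mmul n Theta Q).

Definition dir_diff_at (n : nat) (F : vec -> vec) (x d : vec) : Prop :=
  exists L : vec, forall eps, eps > 0 -> exists delta, delta > 0 /\
    forall t, 0 < t < delta ->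
      norm2 n (vsub (vscal (/ t) (vsub (F (vadd x (vscal t d))) (F x))) L) < eps.

(* After sorting y by P_y, both S_rho and Prox_p are read off the projection onto the
   monotone cone D: S_rho(y) = P_y^T Pi_D(P_y y - rho w), and Prox_p(y) is the soft
   thresholding of S_rho(y).  Pi_D is piecewise affine.  Its KKT multiplier is the vector of
   partial sums of the residual v - Pi_D(v); near v0 the strict decreases of Pi_D(v0) and
   the nonzero multipliers persist, so Pi_D is affine on segments issuing from v0, and every
   element of Q_D(v) reproduces Pi_D both at v and at v0.  A permutation sorting a small
   perturbation of x also sorts x, and soft thresholding is piecewise affine too.  Hence
   Prox_p(x + dx) - Prox_p(x) - V dx vanishes identically for small dx and every
   V in M(x + dx), which gives the estimate for every gamma, and Prox_p is affine on a short
   initial piece of every ray, which gives directional differentiability. *)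

From Stdlib Require Import Reals Lra Lia List Permutation.
Open Scope R_scope.

Lemma rsum_ext m f g : (forall i, (i < m)%nat -> f i = g i) -> rsum m f = rsum m g.
Proof.
  induction m as [|m IH]; simpl; intros H; auto.
  rewrite IH by (intros; apply H; lia). now rewrite H by lia.
Qed.

Lemma rsum_plus m f g : rsum m (fun i => f i + g i) = rsum m f + rsum m g.
Proof. induction m; simpl; [lra | rewrite IHm; lra]. Qed.

Lemma rsum_minus m f g : rsum m (fun i => f i - g i) = rsum m f - rsum m g.
Proof. induction m; simpl; [lra | rewrite IHm; lra]. Qed.

Lemma rsum_scal m c f : rsum m (fun i => c * f i) = c * rsum m f.
Proof. induction m; simpl; [lra | rewrite IHm; lra]. Qed.

Lemma rsum_eq0 m f : (forall i, (i < m)%nat -> f i = 0) -> rsum m f = 0.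
Proof. induction m; simpl; intros H; auto. rewrite IHm, H by (auto; intros; apply H; lia). lra. Qed.

Lemma rsum_le m f g : (forall i, (i < m)%nat -> f i <= g i) -> rsum m f <= rsum m g.
Proof.
  induction m; simpl; intros H; [lra |].
  assert (rsum m f <= rsum m g) by (apply IHm; intros; apply H; lia).
  specialize (H m ltac:(lia)). lra.
Qed.

Lemma rsum_ge0 m f : (forall i, (i < m)%nat -> 0 <= f i) -> 0 <= rsum m f.
Proof. intros H. rewrite <- (rsum_eq0 m (fun _ => 0)) by auto. now apply rsum_le. Qed.

Lemma rsum_exchange a b (f : nat -> nat -> R) :
  rsum a (fun i => rsum b (fun j => f i j)) = rsum b (fun j => rsum a (fun i => f i j)).
Proof.
  induction a; simpl.
  - symmetry; now apply rsum_eq0.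
  - now rewrite IHa, <- rsum_plus.
Qed.

Lemma rsum_const m c : rsum m (fun _ => c) = INR m * c.
Proof. induction m; simpl rsum; [simpl; lra | rewrite IHm, S_INR; lra]. Qed.

Lemma rsum_shift m f : rsum (S m) f = f 0%nat + rsum m (fun r => f (S r)).
Proof.
  induction m; [simpl; ring |].
  change (rsum (S (S m)) f) with (rsum (S m) f + f (S m)). rewrite IHm. simpl. ring.
Qed.

Lemma rsum_trunc m k f :
  (k <= m)%nat -> (forall i, (k <= i < m)%nat -> f i = 0) -> rsum m f = rsum k f.
Proof.
  induction m; intros Hk H; [now replace k with 0%nat by lia |].
  destruct (Nat.eq_dec k (S m)); [now subst |].
  simpl. rewrite IHm by (lia || intros; apply H; lia). rewrite H by lia. ring.
Qed.

Lemma rsum_le_prefix m k f :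
  (k <= m)%nat -> (forall i, (i < m)%nat -> 0 <= f i) -> rsum k f <= rsum m f.
Proof.
  induction m; intros Hk H; [replace k with 0%nat by lia; simpl; lra |].
  destruct (Nat.eq_dec k (S m)); [subst; lra |]. simpl.
  assert (rsum k f <= rsum m f) by (apply IHm; [lia | intros; apply H; lia]).
  specialize (H m ltac:(lia)). lra.
Qed.

Lemma rsum_single m k f :
  (k < m)%nat -> (forall i, (i < m)%nat -> i <> k -> f i = 0) -> rsum m f = f k.
Proof.
  induction m; intros Hk H; simpl; [lia |].
  destruct (Nat.eq_dec k m) as [<- | ].
  - rewrite rsum_eq0 by (intros; apply H; lia). lra.
  - rewrite IHm by (lia || intros; apply H; lia). rewrite (H m) by lia. lra.
Qed.

Lemma rsum_pair m a c h :
  (a < m)%nat -> (c < m)%nat -> a <> c ->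
  (forall k, (k < m)%nat -> k <> a -> k <> c -> h k = 0) -> rsum m h = h a + h c.
Proof.
  intros Ha Hc Hac H.
  rewrite (rsum_ext m h (fun k => (if Nat.eq_dec k a then h k else 0)
                                 + (if Nat.eq_dec k a then 0 else h k)))
    by (intros i _; destruct (Nat.eq_dec i a); lra).
  rewrite rsum_plus, (rsum_single m a), (rsum_single m c); auto.
  - destruct (Nat.eq_dec a a), (Nat.eq_dec c a); congruence.
  - intros i Hi Hne; destruct (Nat.eq_dec i a); [lra | now apply H].
  - intros i Hi Hne; destruct (Nat.eq_dec i a); congruence.
Qed.

Lemma rsum_abs m f : Rabs (rsum m f) <= rsum m (fun i => Rabs (f i)).
Proof. induction m; simpl; [rewrite Rabs_R0; lra |]. eapply Rle_trans; [apply Rabs_triang | lra]. Qed.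

Lemma rsum_indicator_prefix m i a :
  (i < m)%nat -> rsum m (fun j => a j * (if Nat.leb j i then 1 else 0)) = rsum (S i) a.
Proof.
  intros Hi. rewrite (rsum_trunc m (S i)).
  2: lia.
  2: intros j Hj; destruct (Nat.leb_spec j i); [lia | ring].
  apply rsum_ext. intros j Hj. destruct (Nat.leb_spec j i); [ring | lia].
Qed.

Lemma Rabs_le_between a b : Rabs a <= b -> - b <= a <= b.
Proof. intros. pose proof (RRle_abs a). pose proof (RRle_abs (- a)). rewrite Rabs_Ropp in *. lra. Qed.

Definition veq (n : nat) (a b : vec) : Prop := forall i, (i < n)%nat -> a i = b i.
Definition ip (n : nat) (a b : vec) : R := rsum n (fun i => a i * b i).

Lemma sqnorm_ext n a b : veq n a b -> sqnorm n a = sqnorm n b.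
Proof. intros H; unfold sqnorm; apply rsum_ext; intros; now rewrite H. Qed.

Lemma sqnorm_nonneg n a : 0 <= sqnorm n a.
Proof. apply rsum_ge0; intros; apply pow2_ge_0. Qed.

Lemma sqnorm_le0 n a : sqnorm n a <= 0 -> veq n a (fun _ => 0).
Proof.
  unfold sqnorm. induction n; intros H i Hi; [lia |].
  cbn [rsum] in H. pose proof (sqnorm_nonneg n a). pose proof (pow2_ge_0 (a n)).
  unfold sqnorm in *. destruct (Nat.eq_dec i n) as [-> |].
  - assert (a n ^ 2 = 0) by lra. nra.
  - apply IHn; [lra | lia].
Qed.

Lemma norm2_nonneg n a : 0 <= norm2 n a.
Proof. apply sqrt_pos. Qed.

Lemma norm2_ext n a b : veq n a b -> norm2 n a = norm2 n b.
Proof. intros; unfold norm2; f_equal; now apply sqnorm_ext. Qed.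

Lemma norm2_zero n a : veq n a (fun _ => 0) -> norm2 n a = 0.
Proof.
  intros H. unfold norm2, sqnorm. rewrite rsum_eq0; [apply sqrt_0 |].
  intros; rewrite H; auto; simpl; lra.
Qed.

Lemma norm2_scal n t x : 0 <= t -> norm2 n (vscal t x) = t * norm2 n x.
Proof.
  intros Ht. change (sqrt (sqnorm n (vscal t x)) = t * sqrt (sqnorm n x)).
  replace (sqnorm n (vscal t x)) with (t ^ 2 * sqnorm n x).
  - rewrite sqrt_mult_alt by apply pow2_ge_0. now rewrite sqrt_pow2.
  - unfold sqnorm, vscal. rewrite <- rsum_scal. apply rsum_ext; intros; ring.
Qed.

Lemma coord_le_norm2 n a i : (i < n)%nat -> Rabs (a i) <= norm2 n a.
Proof.
  intros Hi. rewrite <- sqrt_Rsqr_abs. unfold norm2. apply sqrt_le_1_alt.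
  rewrite Rsqr_pow2. change (a i ^ 2 <= sqnorm n a).
  assert (E : rsum n (fun j => if Nat.eq_dec j i then a j ^ 2 else 0) = a i ^ 2).
  { rewrite (rsum_single n i); auto.
    - destruct (Nat.eq_dec i i); congruence.
    - intros j _ Hj. destruct (Nat.eq_dec j i); congruence. }
  rewrite <- E. apply rsum_le. intros j _. destruct (Nat.eq_dec j i); [lra | apply pow2_ge_0].
Qed.

Lemma coord_diff_le_norm2 n a b i : (i < n)%nat -> Rabs (a i - b i) <= norm2 n (vsub a b).
Proof. apply (coord_le_norm2 n (vsub a b)). Qed.

Lemma forall_small_fin m (Q : nat -> R -> Prop) :
  (forall i, (i < m)%nat -> exists d, d > 0 /\ forall x, x < d -> Q i x) ->
  exists d, d > 0 /\ forall x, x < d -> forall i, (i < m)%nat -> Q i x.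
Proof.
  induction m; intros H; [exists 1; split; [lra | intros; lia] |].
  destruct IHm as [d1 [Hd1 H1]]; [intros; apply H; lia |].
  destruct (H m ltac:(lia)) as [d2 [Hd2 H2]].
  exists (Rmin d1 d2). split; [now apply Rmin_pos |]. intros x Hx i Hi.
  pose proof (Rmin_l d1 d2). pose proof (Rmin_r d1 d2).
  destruct (Nat.eq_dec i m) as [-> |]; [apply H2; lra | apply H1; [lra | lia]].
Qed.

Lemma ray_linear_fin m (F : nat -> R -> R) :
  (forall j, (j < m)%nat -> exists t1 c, t1 > 0 /\ forall t, 0 < t < t1 -> F j t = t * c) ->
  exists t1 (c : vec), t1 > 0 /\ forall j, (j < m)%nat -> forall t, 0 < t < t1 -> F j t = t * c j.
Proof.
  induction m; intros H; [exists 1, (fun _ => 0); split; [lra | intros; lia] |].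
  destruct IHm as [t1 [c [Ht1 Hc]]]; [intros; apply H; lia |].
  destruct (H m ltac:(lia)) as [t2 [c2 [Ht2 Hc2]]].
  exists (Rmin t1 t2), (fun k => if Nat.eqb k m then c2 else c k). split; [now apply Rmin_pos |].
  intros j Hj t Ht. pose proof (Rmin_l t1 t2). pose proof (Rmin_r t1 t2).
  destruct (Nat.eqb_spec j m) as [-> |]; [apply Hc2; lra | apply Hc; [lia | lra]].
Qed.

Fixpoint lsum (l : list nat) (f : nat -> R) : R :=
  match l with nil => 0 | i :: l' => f i + lsum l' f end.

Lemma lsum_app l1 l2 f : lsum (l1 ++ l2) f = lsum l1 f + lsum l2 f.
Proof. induction l1; simpl; [lra | rewrite IHl1; lra]. Qed.

Lemma rsum_lsum m f : rsum m f = lsum (seq 0 m) f.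
Proof. induction m; [reflexivity |]. rewrite seq_S, lsum_app, <- IHm. simpl. lra. Qed.

Lemma lsum_nth l h : lsum l h = rsum (length l) (fun r => h (nth r l 0%nat)).
Proof. induction l; [reflexivity |]. simpl length. rewrite rsum_shift. simpl. now rewrite IHl. Qed.

Lemma lsum_perm l1 l2 f : Permutation l1 l2 -> lsum l1 f = lsum l2 f.
Proof. induction 1; simpl; lra. Qed.

Lemma lsum_map l s f : lsum (map s l) f = lsum l (fun i => f (s i)).
Proof. induction l; simpl; auto. now rewrite IHl. Qed.

Lemma lsum_eq0 l f : (forall i, In i l -> f i = 0) -> lsum l f = 0.
Proof. induction l; simpl; intros H; auto. rewrite H, IHl; auto. lra. Qed.

Lemma rsum_support m K h :
  NoDup K -> (forall i, In i K -> (i < m)%nat) ->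
  (forall i, (i < m)%nat -> ~ In i K -> h i = 0) ->
  rsum m h = rsum (length K) (fun r => h (nth r K 0%nat)).
Proof.
  intros ND HK Hh. rewrite <- lsum_nth, rsum_lsum.
  set (F := filter (fun i => if in_dec Nat.eq_dec i K then false else true) (seq 0 m)).
  assert (P : Permutation (seq 0 m) (K ++ F)).
  { apply NoDup_Permutation; [apply seq_NoDup | |].
    - apply NoDup_app; auto. { apply NoDup_filter, seq_NoDup. }
      intros a Ha HF. apply filter_In in HF as [_ HF].
      destruct (in_dec Nat.eq_dec a K); congruence.
    - intros x; unfold F; rewrite in_app_iff, filter_In, !in_seq; split.
      + intros Hx. destruct (in_dec Nat.eq_dec x K); auto.
      + intros [Hx | [Hx _]]; [specialize (HK x Hx) |]; lia. }
  rewrite (lsum_perm _ _ h P), lsum_app, (lsum_eq0 F); [ring |].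
  intros i Hi. apply filter_In in Hi as [Hi1 Hi2]. apply in_seq in Hi1.
  apply Hh; [lia |]. destruct (in_dec Nat.eq_dec i K); congruence.
Qed.

Lemma NoDup_map_inj (s : nat -> nat) l :
  (forall i j, In i l -> In j l -> s i = s j -> i = j) -> NoDup l -> NoDup (map s l).
Proof.
  induction l; simpl; intros H Hn; constructor; inversion Hn; subst.
  - intros Hin. apply in_map_iff in Hin as [k [E Hk]].
    assert (k = a) by (apply H; auto). now subst.
  - apply IHl; auto.
Qed.

Section Permutation.
Variables (n : nat) (s : nat -> nat).
Hypothesis Hs : is_perm n s.

Lemma perm_lt i : (i < n)%nat -> (s i < n)%nat.
Proof. apply (proj1 Hs). Qed.

Lemma perm_seq : Permutation (map s (seq 0 n)) (seq 0 n).
Proof.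
  destruct Hs as [Hr Hi].
  assert (ND : NoDup (map s (seq 0 n))).
  { apply NoDup_map_inj; [| apply seq_NoDup].
    intros i k Hi1 Hk1; rewrite in_seq in Hi1, Hk1; apply Hi; lia. }
  assert (Hincl : incl (map s (seq 0 n)) (seq 0 n)).
  { intros x Hx. apply in_map_iff in Hx as [k [<- Hk]]. rewrite in_seq in *. specialize (Hr k). lia. }
  apply NoDup_Permutation; auto using seq_NoDup.
  intros x; split; [apply Hincl |].
  apply NoDup_length_incl; auto. now rewrite length_map.
Qed.

Lemma perm_surj j : (j < n)%nat -> exists i, (i < n)%nat /\ s i = j.
Proof.
  intros Hj. assert (Hin : In j (map s (seq 0 n))).
  { apply (Permutation_in _ (Permutation_sym perm_seq)), in_seq. lia. }
  apply in_map_iff in Hin as [i [E Hi]]. apply in_seq in Hi. exists i; split; [lia | auto].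
Qed.

Lemma rsum_perm f : rsum n (fun i => f (s i)) = rsum n f.
Proof. rewrite !rsum_lsum, <- lsum_map. apply lsum_perm, perm_seq. Qed.

Fixpoint perm_find (j m : nat) : nat :=
  match m with O => O | S k => if Nat.eqb (s k) j then k else perm_find j k end.

Definition sinv (j : nat) : nat := perm_find j n.

Lemma perm_find_spec j m :
  (exists i, (i < m)%nat /\ s i = j) -> (perm_find j m < m)%nat /\ s (perm_find j m) = j.
Proof.
  induction m; simpl; intros [i [Hi E]]; [lia |].
  destruct (Nat.eqb_spec (s m) j); [split; auto |].
  destruct IHm as [A B]; [| split; auto].
  exists i. split; auto. destruct (Nat.eq_dec i m); subst; [congruence | lia].
Qed.

Lemma sinv_spec j : (j < n)%nat -> (sinv j < n)%nat /\ s (sinv j) = j.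
Proof. intros Hj. now apply perm_find_spec, perm_surj. Qed.

Lemma sinv_left i : (i < n)%nat -> sinv (s i) = i.
Proof.
  intros Hi. destruct (sinv_spec (s i)) as [H1 H2]; [now apply perm_lt |].
  apply (proj2 Hs); auto.
Qed.

End Permutation.

Definition vcomp (x : vec) (s : nat -> nat) : vec := fun i => x (s i).

Lemma permm_mv n s x : is_perm n s -> veq n (mvmul n (permm s) x) (vcomp x s).
Proof.
  intros Hs i Hi. unfold mvmul, permm, vcomp.
  rewrite (rsum_single n (s i)); [now rewrite Nat.eqb_refl, Rmult_1_l | now apply (perm_lt n s) |].
  intros k _ Hne. destruct (Nat.eqb_spec k (s i)); [congruence | lra].
Qed.

Lemma permmT_mv n s x : is_perm n s -> veq n (mvmul n (mtr (permm s)) x) (vcomp x (sinv n s)).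
Proof.
  intros Hs i Hi. unfold mvmul, permm, mtr, vcomp. destruct (sinv_spec n s Hs i Hi) as [A B].
  rewrite (rsum_single n (sinv n s i)); [now rewrite B, Nat.eqb_refl, Rmult_1_l | exact A |].
  intros k Hk Hne. destruct (Nat.eqb_spec i (s k)) as [-> |]; [| lra].
  now rewrite sinv_left in Hne.
Qed.

Lemma norm2_perm n s x : is_perm n s -> norm2 n (vcomp x s) = norm2 n x.
Proof. intros Hs. unfold norm2, sqnorm, vcomp. f_equal. apply (rsum_perm n s Hs (fun i => x i ^ 2)). Qed.

Lemma sqnorm_perm n s x : is_perm n s -> sqnorm n (vcomp x s) = sqnorm n x.
Proof. intros Hs. unfold sqnorm, vcomp. apply (rsum_perm n s Hs (fun i => x i ^ 2)). Qed.

Definition swap (i j k : nat) : nat :=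
  if Nat.eqb k i then j else if Nat.eqb k j then i else k.

Lemma swap_perm n i j : (i < n)%nat -> (j < n)%nat -> is_perm n (swap i j).
Proof.
  intros Hi Hj. unfold swap; split.
  - intros k Hk. destruct (Nat.eqb_spec k i), (Nat.eqb_spec k j); lia.
  - intros k l Hk Hl.
    destruct (Nat.eqb_spec k i), (Nat.eqb_spec k j), (Nat.eqb_spec l i), (Nat.eqb_spec l j); lia.
Qed.

(** * Minimizers of strongly convex quadratic objectives *)

Definition lin (a b : vec) (t : R) : vec := fun i => a i + t * (b i - a i).
Definition convex_set (C : vec -> Prop) :=
  forall a b t, C a -> C b -> 0 <= t <= 1 -> C (lin a b t).
Definition convex_fun (C : vec -> Prop) (f : vec -> R) :=
  forall a b t, C a -> C b -> 0 <= t <= 1 -> f (lin a b t) <= (1 - t) * f a + t * f b.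

Lemma le_of_le_add_mul a b c : (forall t, 0 < t <= 1 -> a <= b + t * c) -> a <= b.
Proof.
  intros H. destruct (Rle_dec a b) as [| Hab]; auto. exfalso.
  pose proof (Rabs_pos c). pose proof (RRle_abs c).
  set (t := Rmin 1 ((a - b) / (2 * (Rabs c + 1)))).
  assert (Hq : 0 < (a - b) / (2 * (Rabs c + 1))) by (apply Rdiv_lt_0_compat; lra).
  assert (Ht : 0 < t <= 1) by (unfold t; split; [apply Rmin_pos; lra | apply Rmin_l]).
  assert (t * (Rabs c + 1) <= (a - b) / 2).
  { replace ((a - b) / 2) with ((a - b) / (2 * (Rabs c + 1)) * (Rabs c + 1)) by (field; lra).
    apply Rmult_le_compat_r; [lra | apply Rmin_r]. }
  specialize (H t Ht). nra.
Qed.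

Section Argmin.
Variables (n : nat) (C : vec -> Prop) (f : vec -> R).
Hypothesis HC : convex_set C.
Hypothesis Hf : convex_fun C f.

Lemma argmin_variational_ineq y p z :
  is_argmin_on n C f y p -> C z -> 0 <= ip n (vsub p y) (vsub z p) + f z - f p.
Proof.
  intros [Hp Hmin] Hz.
  apply (le_of_le_add_mul _ _ (sqnorm n (vsub z p) / 2)). intros t Ht.
  assert (Ht' : 0 <= t <= 1) by lra.
  specialize (Hmin (lin p z t) (HC _ _ _ Hp Hz Ht')).
  pose proof (Hf p z t Hp Hz Ht') as Hconv.
  assert (E : sqnorm n (vsub (lin p z t) y)
              = sqnorm n (vsub p y) + 2 * t * ip n (vsub p y) (vsub z p) + t ^ 2 * sqnorm n (vsub z p)).
  { unfold sqnorm, ip, vsub, lin. rewrite <- rsum_scal, <- (rsum_scal n (t ^ 2)), <- !rsum_plus.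
    apply rsum_ext; intros; ring. }
  rewrite E in Hmin.
  apply Rmult_le_reg_l with t; [lra |]. nra.
Qed.

Lemma argmin_nonexpansive_sq y z p q :
  is_argmin_on n C f y p -> is_argmin_on n C f z q -> sqnorm n (vsub p q) <= sqnorm n (vsub y z).
Proof.
  intros Hp Hq.
  pose proof (argmin_variational_ineq y p q Hp (proj1 Hq)).
  pose proof (argmin_variational_ineq z q p Hq (proj1 Hp)).
  unfold ip, sqnorm, vsub in *.
  assert (rsum n (fun i => (p i - y i) * (q i - p i)) + rsum n (fun i => (q i - z i) * (p i - q i))
          = rsum n (fun i => (y i - z i) * (p i - q i)) - rsum n (fun i => (p i - q i) ^ 2)).
  { rewrite <- rsum_plus, <- rsum_minus. apply rsum_ext; intros; ring. }
  assert (2 * rsum n (fun i => (y i - z i) * (p i - q i))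
          <= rsum n (fun i => (y i - z i) ^ 2) + rsum n (fun i => (p i - q i) ^ 2)).
  { rewrite <- rsum_scal, <- rsum_plus. apply rsum_le. intros.
    pose proof (pow2_ge_0 ((y i - z i) - (p i - q i))). nra. }
  lra.
Qed.

Lemma argmin_nonexpansive y z p q :
  is_argmin_on n C f y p -> is_argmin_on n C f z q -> norm2 n (vsub p q) <= norm2 n (vsub y z).
Proof. intros. apply sqrt_le_1_alt. eapply argmin_nonexpansive_sq; eauto. Qed.

Lemma argmin_unique y z p q :
  is_argmin_on n C f y p -> is_argmin_on n C f z q -> veq n y z -> veq n p q.
Proof.
  intros Hp Hq E i Hi.
  pose proof (argmin_nonexpansive_sq y z p q Hp Hq).
  assert (sqnorm n (vsub y z) = 0).
  { unfold sqnorm, vsub. apply rsum_eq0. intros j Hj. rewrite E by auto. simpl; ring. }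
  pose proof (sqnorm_le0 n (vsub p q) ltac:(lra) i Hi). unfold vsub in *. lra.
Qed.

End Argmin.

Lemma convex_True : convex_set (fun _ => True).
Proof. now intros. Qed.

Lemma convex_D n : convex_set (inD n).
Proof. intros a b t Ha Hb Ht i Hi. unfold lin. specialize (Ha i Hi). specialize (Hb i Hi). nra. Qed.

Lemma inD_ext n a b : veq n a b -> inD n a -> inD n b.
Proof. intros E H i Hi. rewrite <- !E by lia. now apply H. Qed.

Lemma convex_zero C : convex_fun C (fun _ => 0).
Proof. intros a b t _ _ _. lra. Qed.

Lemma Rabs_lin a b t : 0 <= t <= 1 -> Rabs (a + t * (b - a)) <= (1 - t) * Rabs a + t * Rabs b.
Proof.
  intros Ht. replace (a + t * (b - a)) with ((1 - t) * a + t * b) by ring.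
  eapply Rle_trans; [apply Rabs_triang |].
  rewrite !Rabs_mult, (Rabs_pos_eq t), (Rabs_pos_eq (1 - t)) by lra. lra.
Qed.

Lemma convex_pen n beta rho C : 0 <= beta -> 0 <= rho -> convex_fun C (pen n beta rho).
Proof.
  intros Hb Hr a b t _ _ Ht. unfold pen, l1norm, pairsum, lin.
  assert (rsum n (fun i => Rabs (a i + t * (b i - a i)))
          <= (1 - t) * rsum n (fun i => Rabs (a i)) + t * rsum n (fun i => Rabs (b i))).
  { rewrite <- !rsum_scal, <- rsum_plus. apply rsum_le; intros; now apply Rabs_lin. }
  assert (rsum n (fun j => rsum j (fun i => Rabs (a i + t * (b i - a i) - (a j + t * (b j - a j)))))
          <= (1 - t) * rsum n (fun j => rsum j (fun i => Rabs (a i - a j)))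
             + t * rsum n (fun j => rsum j (fun i => Rabs (b i - b j)))).
  { rewrite <- !rsum_scal, <- rsum_plus. apply rsum_le; intros.
    rewrite <- !rsum_scal, <- rsum_plus. apply rsum_le; intros.
    replace (a i0 + t * (b i0 - a i0) - (a i + t * (b i - a i)))
      with ((a i0 - a i) + t * ((b i0 - b i) - (a i0 - a i))) by ring.
    now apply Rabs_lin. }
  nra.
Qed.

(** * The penalty and its proximal map *)

Lemma pairsum_full n x :
  rsum n (fun j => rsum n (fun i => Rabs (x i - x j))) = 2 * pairsum n x.
Proof.
  unfold pairsum. induction n; [simpl; lra |].
  cbn [rsum]. rewrite rsum_plus, IHn.
  rewrite (rsum_ext n (fun j => Rabs (x n - x j)) (fun i => Rabs (x i - x n)))
    by (intros; apply Rabs_minus_sym).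
  replace (x n - x n) with 0 by ring. rewrite Rabs_R0. lra.
Qed.

Lemma pen_perm n b r s x : is_perm n s -> pen n b r (vcomp x s) = pen n b r x.
Proof.
  intros Hs. unfold pen, l1norm, vcomp. rewrite (rsum_perm n s Hs (fun i => Rabs (x i))).
  enough (pairsum n (fun i => x (s i)) = pairsum n x) as -> by reflexivity.
  apply Rmult_eq_reg_l with 2; [| lra]. rewrite <- !pairsum_full.
  rewrite (rsum_perm n s Hs (fun j => rsum n (fun i => Rabs (x (s i) - x j)))).
  apply rsum_ext; intros j _. apply (rsum_perm n s Hs (fun i => Rabs (x i - x j))).
Qed.

Lemma pen_ext n b r x y : veq n x y -> pen n b r x = pen n b r y.
Proof.
  intros H. unfold pen, l1norm, pairsum. f_equal; f_equal.
  - apply rsum_ext; intros; now rewrite H.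
  - apply rsum_ext; intros; apply rsum_ext; intros. rewrite !H by lia. reflexivity.
Qed.

Section Prox.
Variables (n : nat) (b r : R) (prox : vec -> vec).
Hypothesis Hb : 0 <= b.
Hypothesis Hr : 0 <= r.
Hypothesis Hprox : is_prox_map n (pen n b r) prox.

Lemma prox_unique y q : is_argmin_on n (fun _ => True) (pen n b r) y q -> veq n (prox y) q.
Proof.
  intros H. apply (argmin_unique n _ _ convex_True (convex_pen n b r _ Hb Hr) y y); auto.
  intros i _; auto.
Qed.

Lemma prox_nonexpansive y z : norm2 n (vsub (prox y) (prox z)) <= norm2 n (vsub y z).
Proof. apply (argmin_nonexpansive n _ _ convex_True (convex_pen n b r _ Hb Hr)); apply Hprox. Qed.

Lemma prox_perm s y : is_perm n s -> veq n (vcomp (prox y) s) (prox (vcomp y s)).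
Proof.
  intros Hs. set (p := prox (vcomp y s)). set (q := vcomp p (sinv n s)).
  assert (Eq : veq n (vcomp q s) p) by (intros i Hi; unfold q, vcomp; now rewrite sinv_left).
  assert (Obj : forall z, / 2 * sqnorm n (vsub z y) + pen n b r z
                 = / 2 * sqnorm n (vsub (vcomp z s) (vcomp y s)) + pen n b r (vcomp z s)).
  { intros z. rewrite pen_perm by auto. now rewrite <- (sqnorm_perm n s (vsub z y)). }
  assert (Hq : is_argmin_on n (fun _ => True) (pen n b r) y q).
  { split; auto. intros z _. rewrite !Obj.
    rewrite (sqnorm_ext n (vsub (vcomp q s) (vcomp y s)) (vsub p (vcomp y s)))
      by (intros i Hi; unfold vsub; now rewrite Eq).
    rewrite (pen_ext n b r (vcomp q s) p) by auto. now apply (Hprox (vcomp y s)). }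
  intros i Hi. unfold vcomp at 1. rewrite (prox_unique y q Hq) by now apply (perm_lt n s).
  unfold q, vcomp. now rewrite sinv_left.
Qed.

(* Swapping an inverted pair of [prox y] would not increase the objective. *)
Lemma prox_sorted y : inD n y -> inD n (prox y).
Proof.
  intros Hy i Hi. destruct (Rle_dec (prox y (S i)) (prox y i)) as [| Hlt]; auto. exfalso.
  set (p := prox y) in *. set (p' := vcomp p (swap i (S i))).
  assert (Hs : is_perm n (swap i (S i))) by (apply swap_perm; lia).
  assert (Hd : sqnorm n (vsub p' y) - sqnorm n (vsub p y) = 2 * (p i - p (S i)) * (y i - y (S i))).
  { unfold sqnorm. rewrite <- rsum_minus, (rsum_pair n i (S i)); try lia.
    - unfold p', vcomp, vsub, swap. rewrite Nat.eqb_refl.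
      destruct (Nat.eqb_spec (S i) i); [lia |]. rewrite Nat.eqb_refl. ring.
    - intros k Hk H1 H2. unfold p', vcomp, vsub, swap.
      destruct (Nat.eqb_spec k i), (Nat.eqb_spec k (S i)); [lia | lia | lia | ring]. }
  assert (Hmin : is_argmin_on n (fun _ => True) (pen n b r) y p').
  { split; auto. intros z _. unfold p'. rewrite pen_perm by auto. fold p'.
    pose proof (proj2 (Hprox y) z I). pose proof (Hy i Hi). fold p in H. nra. }
  pose proof (prox_unique y p' Hmin i ltac:(lia)) as E.
  unfold p', vcomp, swap in E. rewrite Nat.eqb_refl in E. fold p in E. lra.
Qed.

End Prox.

Lemma mv_ext c A x y : veq c x y -> forall i, mvmul c A x i = mvmul c A y i.
Proof. intros H i. unfold mvmul. apply rsum_ext; intros; now rewrite H. Qed.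

Lemma mv_meq r c A A' x i : meq r c A A' -> (i < r)%nat -> mvmul c A x i = mvmul c A' x i.
Proof. intros H Hi. unfold mvmul. apply rsum_ext; intros; now rewrite H. Qed.

Lemma mv_mmul c k A B x i : mvmul c (mmul k A B) x i = mvmul k A (mvmul c B x) i.
Proof.
  unfold mvmul, mmul.
  rewrite (rsum_ext c _ (fun l => rsum k (fun r => A i r * B r l * x l)))
    by (intros; rewrite Rmult_comm, <- rsum_scal; apply rsum_ext; intros; ring).
  rewrite rsum_exchange. apply rsum_ext; intros. rewrite <- rsum_scal. apply rsum_ext; intros; ring.
Qed.

Lemma mv_idm k x i : (i < k)%nat -> mvmul k idm x i = x i.
Proof.
  intros Hi. unfold mvmul, idm. rewrite (rsum_single k i); auto.
  - rewrite Nat.eqb_refl; ring.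
  - intros j Hj Hne. destruct (Nat.eqb_spec i j); [lia | ring].
Qed.

Lemma mv_diagm n q x i : (i < n)%nat -> mvmul n (diagm q) x i = q i * x i.
Proof.
  intros Hi. unfold mvmul, diagm. rewrite (rsum_single n i); auto.
  - now rewrite Nat.eqb_refl.
  - intros j Hj Hne. destruct (Nat.eqb_spec i j); [lia | ring].
Qed.

Lemma mv_plus c A x y i : mvmul c A (fun j => x j + y j) i = mvmul c A x i + mvmul c A y i.
Proof. unfold mvmul. rewrite <- rsum_plus. apply rsum_ext; intros; ring. Qed.

Lemma mv_minus c A x y i : mvmul c A (fun j => x j - y j) i = mvmul c A x i - mvmul c A y i.
Proof. unfold mvmul. rewrite <- rsum_minus. apply rsum_ext; intros; ring. Qed.

Lemma mv_msub c A B x i : mvmul c (msub A B) x i = mvmul c A x i - mvmul c B x i.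
Proof. unfold mvmul, msub. rewrite <- rsum_minus. apply rsum_ext; intros; ring. Qed.

Lemma Q_K_mv n K W Q a u mu :
  NoDup K -> (forall i, In i K -> (i < n - 1)%nat) ->
  is_inverse (length K) (mmul n (BK K) (mtr (BK K))) W ->
  meq n n Q (msub idm (mmul (length K) (mtr (BK K)) (mmul (length K) W (BK K)))) ->
  (forall j, (j < n)%nat -> u j - a j + mvmul (n - 1) (mtr Bm) mu j = 0) ->
  (forall i, (i < n - 1)%nat -> mu i <> 0 -> In i K) ->
  (forall i, In i K -> mvmul n Bm u i = 0) ->
  veq n (mvmul n Q a) u.
Proof.
  intros ND HK [HW _] HQ Hrep Hsupp HB j Hj.
  set (muK := fun r => mu (nth r K 0%nat)).
  assert (BTK : forall l, mvmul (n - 1) (mtr Bm) mu l = mvmul (length K) (mtr (BK K)) muK l).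
  { intros l. unfold mvmul, mtr, BK, muK. apply rsum_support; auto. intros i Hi HnK.
    destruct (Req_dec (mu i) 0) as [-> | E]; [ring | exfalso; auto]. }
  assert (Ha : veq n a (fun l => u l + mvmul (length K) (mtr (BK K)) muK l)).
  { intros l Hl. rewrite <- BTK. specialize (Hrep l Hl). lra. }
  assert (HBa : veq (length K) (mvmul n (BK K) a)
                                (mvmul (length K) (mmul n (BK K) (mtr (BK K))) muK)).
  { intros r Hr. rewrite (mv_ext n _ _ _ Ha), mv_plus, mv_mmul.
    enough (mvmul n (BK K) u r = 0) by lra. apply HB, nth_In. auto. }
  assert (HW' : veq (length K) (mvmul (length K) W (mvmul n (BK K) a)) muK).
  { intros r Hr. rewrite (mv_ext (length K) W _ _ HBa), <- mv_mmul.
    rewrite (mv_meq (length K) (length K) _ idm muK r HW Hr). now apply mv_idm. }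
  rewrite (mv_meq n n _ _ a j HQ Hj), mv_msub, mv_idm, mv_mmul by auto.
  rewrite (mv_ext (length K) _ _ _ (fun r _ => mv_mmul n (length K) W (BK K) a r)).
  rewrite (mv_ext (length K) _ _ _ HW'), <- BTK.
  specialize (Hrep j Hj). lra.
Qed.

(** * Projection onto the monotone cone *)

Lemma Bm_mv n u i : (S i < n)%nat -> mvmul n Bm u i = u i - u (S i).
Proof.
  intros H. unfold mvmul. rewrite (rsum_pair n i (S i)); try lia.
  - unfold Bm. rewrite Nat.eqb_refl. destruct (Nat.eqb_spec (S i) i); [lia |].
    rewrite Nat.eqb_refl. ring.
  - intros k Hk H1 H2. unfold Bm.
    destruct (Nat.eqb_spec k i), (Nat.eqb_spec k (S i)); [lia | lia | lia | ring].
Qed.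

Lemma Bm_mv_nonneg n u i : inD n u -> (i < n - 1)%nat -> 0 <= mvmul n Bm u i.
Proof. intros Hu Hi. rewrite Bm_mv by lia. pose proof (Hu i ltac:(lia)). lra. Qed.

Definition BmT_apply (m : nat) (lam : vec) (j : nat) : R :=
  (if Nat.ltb j m then lam j else 0)
  - (match j with O => 0 | S k => if Nat.ltb k m then lam k else 0 end).

Lemma BmT_mv m lam j : mvmul m (mtr Bm) lam j = BmT_apply m lam j.
Proof.
  unfold mvmul, mtr. induction m; [unfold BmT_apply; destruct j; simpl; lra |].
  cbn [rsum]. rewrite IHm. unfold BmT_apply, Bm. destruct j as [| j];
  repeat match goal with
  | |- context [Nat.ltb ?a ?b] => destruct (Nat.ltb_spec a b)
  | |- context [Nat.eqb ?a ?b] => destruct (Nat.eqb_spec a b)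
  end; subst; try lia; try lra; assert (j = m) by lia; subst; lra.
Qed.

Lemma ip_BmT n mu a :
  rsum n (fun j => mvmul (n - 1) (mtr Bm) mu j * a j) = rsum (n - 1) (fun i => mu i * mvmul n Bm a i).
Proof.
  unfold mvmul, mtr.
  rewrite (rsum_ext n _ (fun j => rsum (n - 1) (fun i => Bm i j * mu i * a j)))
    by (intros; rewrite Rmult_comm, <- rsum_scal; apply rsum_ext; intros; ring).
  rewrite rsum_exchange. apply rsum_ext; intros.
  rewrite <- rsum_scal. apply rsum_ext; intros; ring.
Qed.

Lemma proj_ext n proj a b : is_proj_D n proj -> veq n a b -> veq n (proj a) (proj b).
Proof. intros Hp. apply (argmin_unique n _ _ (convex_D n) (convex_zero _) a b); apply Hp. Qed.

Section Proj.
Variables (n : nat) (proj : vec -> vec).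
Hypothesis Hproj : is_proj_D n proj.

(* The multiplier of M_D(v), unique by [proj_mult_unique]. *)
Definition proj_mult (v : vec) (i : nat) : R := rsum (S i) (fun j => v j - proj v j).

Lemma proj_in v : inD n (proj v).
Proof. apply (proj1 (Hproj v)). Qed.

Lemma proj_variational_ineq v z : inD n z -> 0 <= ip n (vsub (proj v) v) (vsub z (proj v)).
Proof.
  intros Hz.
  pose proof (argmin_variational_ineq n _ _ (convex_D n) (convex_zero _) v (proj v) z (Hproj v) Hz).
  lra.
Qed.

Lemma proj_nonexpansive v v2 : norm2 n (vsub (proj v2) (proj v)) <= norm2 n (vsub v2 v).
Proof. apply (argmin_nonexpansive n _ _ (convex_D n) (convex_zero _)); apply Hproj. Qed.

Lemma proj_prefix_test v i c :
  (i < n)%nat -> inD n (fun j => proj v j + c * (if Nat.leb j i then 1 else 0)) ->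
  c * proj_mult v i <= 0.
Proof.
  intros Hi Hz. pose proof (proj_variational_ineq v _ Hz) as H. unfold ip, vsub in H.
  rewrite (rsum_ext n _ (fun j => - c * ((v j - proj v j) * (if Nat.leb j i then 1 else 0)))) in H
    by (intros; ring).
  rewrite rsum_scal, rsum_indicator_prefix in H by lia. unfold proj_mult. lra.
Qed.

Lemma proj_residual_sum v : rsum n (fun j => v j - proj v j) = 0.
Proof.
  destruct (Nat.eq_dec n 0) as [E | Hn]; [now rewrite E |].
  assert (Hc : forall c, inD n (fun j => proj v j + c * (if Nat.leb j (n - 1) then 1 else 0))).
  { intros c k Hk. pose proof (proj_in v k Hk).
    destruct (Nat.leb_spec (S k) (n - 1)), (Nat.leb_spec k (n - 1)); try lia; lra. }
  pose proof (proj_prefix_test v (n - 1) 1 ltac:(lia) (Hc 1)).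
  pose proof (proj_prefix_test v (n - 1) (-1) ltac:(lia) (Hc (-1))).
  unfold proj_mult in *. replace (S (n - 1)) with n in * by lia. lra.
Qed.

Lemma proj_mult_nonpos v i : (i < n - 1)%nat -> proj_mult v i <= 0.
Proof.
  intros Hi. enough (Hz : inD n (fun j => proj v j + 1 * (if Nat.leb j i then 1 else 0)))
    by (pose proof (proj_prefix_test v i 1 ltac:(lia) Hz); lra).
  intros k Hk. pose proof (proj_in v k Hk).
  destruct (Nat.leb_spec (S k) i), (Nat.leb_spec k i); try lia; lra.
Qed.

Lemma proj_mult_compl v i : (i < n - 1)%nat -> mvmul n Bm (proj v) i > 0 -> proj_mult v i = 0.
Proof.
  intros Hi Hb. rewrite Bm_mv in Hb by lia. set (e := proj v i - proj v (S i)) in *.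
  enough (Hz : inD n (fun j => proj v j + - e * (if Nat.leb j i then 1 else 0))).
  { pose proof (proj_prefix_test v i (- e) ltac:(lia) Hz). pose proof (proj_mult_nonpos v i Hi). nra. }
  intros k Hk. pose proof (proj_in v k Hk).
  destruct (Nat.leb_spec (S k) i), (Nat.leb_spec k i); try lia; [lra | | lra].
  assert (k = i) by lia. subst. unfold e; lra.
Qed.

Lemma proj_mult_zero_or_active v i :
  (i < n - 1)%nat -> proj_mult v i = 0 \/ mvmul n Bm (proj v) i = 0.
Proof.
  intros Hi. destruct (Req_dec (mvmul n Bm (proj v) i) 0) as [| Hne]; [now right | left].
  apply proj_mult_compl; auto. pose proof (Bm_mv_nonneg n (proj v) i (proj_in v) Hi). lra.
Qed.

Lemma proj_mult_stationary v j :
  (j < n)%nat -> proj v j - v j + mvmul (n - 1) (mtr Bm) (proj_mult v) j = 0.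
Proof.
  intros Hj. rewrite BmT_mv. unfold BmT_apply, proj_mult. pose proof (proj_residual_sum v) as H0.
  destruct (Nat.ltb_spec j (n - 1)), j as [| j]; cbn [rsum] in *.
  - lra.
  - destruct (Nat.ltb_spec j (n - 1)); [lra | lia].
  - replace n with 1%nat in H0 by lia. cbn [rsum] in H0. lra.
  - destruct (Nat.ltb_spec j (n - 1)); [| lia].
    replace n with (S (S j)) in H0 by lia. cbn [rsum] in H0. lra.
Qed.

Lemma proj_mult_unique v lam :
  (forall j, (j < n)%nat -> proj v j - v j + mvmul (n - 1) (mtr Bm) lam j = 0) ->
  forall i, (i < n - 1)%nat -> lam i = proj_mult v i.
Proof.
  intros H. induction i; intros Hi.
  - specialize (H 0%nat ltac:(lia)). rewrite BmT_mv in H. unfold BmT_apply in H.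
    destruct (Nat.ltb_spec 0 (n - 1)); [| lia]. unfold proj_mult. simpl. lra.
  - specialize (H (S i) ltac:(lia)). rewrite BmT_mv in H. unfold BmT_apply in H.
    destruct (Nat.ltb_spec (S i) (n - 1)), (Nat.ltb_spec i (n - 1)); try lia.
    rewrite IHi in H by lia. unfold proj_mult in *. cbn [rsum] in *. lra.
Qed.

Lemma proj_of_kkt v u mu :
  inD n u -> (forall i, (i < n - 1)%nat -> mu i <= 0) ->
  (forall j, (j < n)%nat -> u j - v j + mvmul (n - 1) (mtr Bm) mu j = 0) ->
  (forall i, (i < n - 1)%nat -> mu i * mvmul n Bm u i = 0) -> veq n (proj v) u.
Proof.
  intros Hu Hmu Hrep Hc.
  assert (VI : 0 <= ip n (vsub u v) (vsub (proj v) u)).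
  { unfold ip, vsub.
    rewrite (rsum_ext n _ (fun j => (-1) * (mvmul (n - 1) (mtr Bm) mu j * (proj v j - u j))))
      by (intros j Hj; specialize (Hrep j Hj); nra).
    rewrite rsum_scal, ip_BmT.
    rewrite (rsum_ext (n - 1) _ (fun i => mu i * mvmul n Bm (proj v) i - mu i * mvmul n Bm u i)).
    - rewrite rsum_minus, (rsum_eq0 (n - 1) (fun i => mu i * mvmul n Bm u i)) by auto.
      enough (rsum (n - 1) (fun i => mu i * mvmul n Bm (proj v) i) <= 0) by lra.
      rewrite <- (rsum_eq0 (n - 1) (fun _ => 0)) by auto. apply rsum_le. intros i Hi.
      pose proof (Bm_mv_nonneg n (proj v) i (proj_in v) Hi). pose proof (Hmu i Hi). nra.
    - intros i Hi. rewrite !Bm_mv by lia. unfold vsub. ring. }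
  pose proof (proj2 (Hproj v) u Hu).
  assert (E : sqnorm n (vsub (proj v) v)
              = sqnorm n (vsub (proj v) u) + 2 * ip n (vsub u v) (vsub (proj v) u)
                + sqnorm n (vsub u v)).
  { unfold sqnorm, ip, vsub. rewrite <- rsum_scal, <- !rsum_plus. apply rsum_ext; intros; ring. }
  intros i Hi. pose proof (sqnorm_le0 n (vsub (proj v) u) ltac:(lra) i Hi). unfold vsub in *. lra.
Qed.

Lemma proj_mult_lipschitz v v2 i :
  (i < n)%nat -> Rabs (proj_mult v2 i - proj_mult v i) <= 2 * INR n * norm2 n (vsub v2 v).
Proof.
  intros Hi. unfold proj_mult. rewrite <- rsum_minus.
  eapply Rle_trans; [apply rsum_abs |].
  apply Rle_trans with (rsum (S i) (fun _ => 2 * norm2 n (vsub v2 v))).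
  - apply rsum_le. intros j Hj.
    replace (v2 j - proj v2 j - (v j - proj v j)) with ((v2 j - v j) - (proj v2 j - proj v j)) by ring.
    eapply Rle_trans; [apply Rabs_triang |]. rewrite Rabs_Ropp.
    pose proof (coord_diff_le_norm2 n v2 v j ltac:(lia)).
    pose proof (coord_diff_le_norm2 n (proj v2) (proj v) j ltac:(lia)).
    pose proof (proj_nonexpansive v v2). lra.
  - rewrite rsum_const. pose proof (norm2_nonneg n (vsub v2 v)).
    assert (INR (S i) <= INR n) by (apply le_INR; lia). nra.
Qed.

Lemma Bm_proj_lipschitz v v2 i :
  (S i < n)%nat -> Rabs (mvmul n Bm (proj v2) i - mvmul n Bm (proj v) i) <= 2 * norm2 n (vsub v2 v).
Proof.
  intros Hi. rewrite !Bm_mv by auto.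
  pose proof (coord_diff_le_norm2 n (proj v2) (proj v) i ltac:(lia)).
  pose proof (coord_diff_le_norm2 n (proj v2) (proj v) (S i) Hi).
  pose proof (proj_nonexpansive v v2).
  replace (proj v2 i - proj v2 (S i) - (proj v i - proj v (S i)))
    with ((proj v2 i - proj v i) - (proj v2 (S i) - proj v (S i))) by ring.
  eapply Rle_trans; [apply Rabs_triang |]. rewrite Rabs_Ropp. lra.
Qed.

Definition pattern_stable (v : vec) (d : R) : Prop :=
  d > 0 /\ forall v2, norm2 n (vsub v2 v) < d ->
    (forall i, (i < n - 1)%nat -> mvmul n Bm (proj v) i > 0 -> mvmul n Bm (proj v2) i > 0) /\
    (forall i, (i < n - 1)%nat -> proj_mult v i <> 0 -> proj_mult v2 i <> 0).

Lemma pattern_stable_ex v : exists d, pattern_stable v d.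
Proof.
  destruct (forall_small_fin (n - 1) (fun i x => forall v2, norm2 n (vsub v2 v) = x ->
     (mvmul n Bm (proj v) i > 0 -> mvmul n Bm (proj v2) i > 0) /\
     (proj_mult v i <> 0 -> proj_mult v2 i <> 0))) as [d [Hd H]].
  - intros i Hi. pose proof (pos_INR n).
    set (a := mvmul n Bm (proj v) i). set (l := proj_mult v i).
    set (da := if Rlt_dec 0 a then a / 2 else 1).
    set (dl := if Req_EM_T l 0 then 1 else Rabs l / (2 * INR n + 1)).
    assert (Hda : 0 < da) by (unfold da; destruct (Rlt_dec 0 a); lra).
    assert (Hdl : 0 < dl).
    { unfold dl. destruct (Req_EM_T l 0); [lra |].
      apply Rdiv_lt_0_compat; [now apply Rabs_pos_lt | lra]. }
    exists (Rmin da dl). split; [now apply Rmin_pos |].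
    intros x Hx v2 <-. pose proof (Rmin_l da dl). pose proof (Rmin_r da dl).
    pose proof (norm2_nonneg n (vsub v2 v)). split.
    + intros Ha. fold a in Ha. unfold da in *. destruct (Rlt_dec 0 a); [| lra].
      pose proof (Bm_proj_lipschitz v v2 i ltac:(lia)). fold a in H3.
      apply Rabs_le_between in H3. lra.
    + intros Hl E. fold l in Hl. unfold dl in *. destruct (Req_EM_T l 0); [congruence |].
      pose proof (proj_mult_lipschitz v v2 i ltac:(lia)). fold l in H3.
      rewrite E, Rminus_0_l, Rabs_Ropp in H3.
      assert (norm2 n (vsub v2 v) * (2 * INR n + 1) < Rabs l).
      { apply Rlt_le_trans with (Rabs l / (2 * INR n + 1) * (2 * INR n + 1)).
        - apply Rmult_lt_compat_r; lra.
        - right; field; lra. }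
      nra.
  - exists d. split; auto. intros v2 Hv2. split; intros i Hi; now apply (H _ Hv2 i Hi v2).
Qed.

Lemma pattern_stable_le v d d' : pattern_stable v d -> 0 < d' <= d -> pattern_stable v d'.
Proof. intros [_ H] Hd'. split; [lra |]. intros v2 Hv2. apply H. lra. Qed.

Lemma pattern_stable_compl v d v2 i :
  pattern_stable v d -> norm2 n (vsub v2 v) < d -> (i < n - 1)%nat ->
  (proj_mult v i = 0 /\ proj_mult v2 i = 0) \/
  (mvmul n Bm (proj v) i = 0 /\ mvmul n Bm (proj v2) i = 0).
Proof.
  intros [_ Hst] Hv2 Hi. destruct (Hst v2 Hv2) as [Ha Hl].
  pose proof (Bm_mv_nonneg n (proj v) i (proj_in v) Hi).
  destruct (proj_mult_zero_or_active v i Hi) as [E1 | E1],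
           (proj_mult_zero_or_active v2 i Hi) as [E2 | E2]; auto.
  - right. split; auto. destruct (Req_dec (mvmul n Bm (proj v) i) 0); auto.
    pose proof (Ha i Hi ltac:(lra)). lra.
  - left. split; auto. destruct (Req_dec (proj_mult v i) 0); auto. now pose proof (Hl i Hi H0).
Qed.

Lemma proj_affine_segment v d v2 s :
  pattern_stable v d -> norm2 n (vsub v2 v) < d -> 0 <= s <= 1 ->
  veq n (proj (lin v v2 s)) (lin (proj v) (proj v2) s).
Proof.
  intros Hst Hv2 Hs.
  apply proj_of_kkt with (mu := lin (proj_mult v) (proj_mult v2) s).
  - apply convex_D; auto using proj_in.
  - intros i Hi. pose proof (proj_mult_nonpos v i Hi). pose proof (proj_mult_nonpos v2 i Hi).
    unfold lin. nra.
  - intros j Hj. pose proof (proj_mult_stationary v j Hj). pose proof (proj_mult_stationary v2 j Hj).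
    rewrite BmT_mv in *. unfold BmT_apply, lin in *.
    destruct (Nat.ltb_spec j (n - 1)), j as [| j]; try destruct (Nat.ltb_spec j (n - 1)); nra.
  - intros i Hi. unfold lin. rewrite !Bm_mv in * by lia.
    destruct (pattern_stable_compl v d v2 i Hst Hv2 Hi) as [[E1 E2] | [E1 E2]];
      rewrite ?E1, ?E2; [ring |]. rewrite !Bm_mv in E1, E2 by lia.
    replace (proj v i + s * (proj v2 i - proj v i) - (proj v (S i) + s * (proj v2 (S i) - proj v (S i))))
      with ((proj v i - proj v (S i))
            + s * ((proj v2 i - proj v2 (S i)) - (proj v i - proj v (S i)))) by ring.
    rewrite E1, E2. ring.
Qed.

Lemma Q_D_mv_proj v d v2 Q :
  pattern_stable v d -> norm2 n (vsub v2 v) < d -> Q_D n proj v2 Q ->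
  veq n (mvmul n Q v2) (proj v2) /\ veq n (mvmul n Q v) (proj v).
Proof.
  intros [_ Hst] Hv2 [K [[ND [[lam [[Hstat _] Hsupp]] [HI _]]] [W [HW HQ]]]].
  destruct (Hst v2 Hv2) as [Ha Hl].
  assert (HK : forall i, In i K -> (i < n - 1)%nat) by (intros i Hi; apply (HI i Hi)).
  split.
  - apply (Q_K_mv n K W Q v2 (proj v2) lam); auto. intros i Hi; apply (HI i Hi).
  - apply (Q_K_mv n K W Q v (proj v) (proj_mult v)); auto using proj_mult_stationary.
    + intros i Hi Hne. apply Hsupp; auto.
      rewrite (proj_mult_unique v2 lam Hstat i Hi). now apply Hl.
    + intros i HiK. pose proof (HK i HiK) as Hi. destruct (HI i HiK) as [_ E2].
      pose proof (Bm_mv_nonneg n (proj v) i (proj_in v) Hi).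
      destruct (Req_dec (mvmul n Bm (proj v) i) 0); auto.
      pose proof (Ha i Hi ltac:(lra)). lra.
Qed.

End Proj.

(** * Soft thresholding and the sorted case *)

Definition soft (b a : R) : R :=
  if Rlt_dec b a then a - b else if Rlt_dec a (-b) then a + b else 0.

Lemma soft_mono b a c : 0 <= b -> a <= c -> soft b a <= soft b c.
Proof.
  intros Hb H. unfold soft.
  destruct (Rlt_dec b a), (Rlt_dec a (-b)), (Rlt_dec b c), (Rlt_dec c (-b)); lra.
Qed.

Lemma soft_0 a : soft 0 a = a.
Proof. unfold soft. destruct (Rlt_dec 0 a), (Rlt_dec a (-0)); lra. Qed.

Lemma soft_minimizes b u z :
  0 <= b -> / 2 * (soft b u - u) ^ 2 + b * Rabs (soft b u) <= / 2 * (z - u) ^ 2 + b * Rabs z.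
Proof.
  intros Hb. pose proof (pow2_ge_0 (z - u + b)). pose proof (pow2_ge_0 (z - u - b)).
  pose proof (pow2_ge_0 (z - u)).
  unfold soft. destruct (Rlt_dec b u), (Rlt_dec u (-b)); unfold Rabs;
  repeat match goal with |- context [Rcase_abs ?x] => destruct (Rcase_abs x) end; nra.
Qed.

Lemma inD_antitone m x i j : inD m x -> (i <= j)%nat -> (j < m)%nat -> x j <= x i.
Proof.
  intros H Hij Hj. induction j; [replace i with 0%nat by lia; lra |].
  destruct (Nat.eq_dec i (S j)) as [-> |]; [lra |].
  pose proof (H j Hj). assert (x j <= x i) by (apply IHj; lia). lra.
Qed.

Lemma pairsum_sorted m x : inD m x -> pairsum m x = rsum m (fun k => wvec m k * x k).
Proof.
  unfold wvec. induction m; intros H; [reflexivity |]. unfold pairsum in *. cbn [rsum].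
  rewrite IHm by (intros i Hi; apply H; lia).
  rewrite (rsum_ext m (fun i => Rabs (x i - x m)) (fun i => x i - x m)).
  - rewrite (rsum_ext m (fun k => (INR (S m) - 2 * INR k - 1) * x k)
                        (fun k => (INR m - 2 * INR k - 1) * x k + x k)) by (intros; rewrite S_INR; ring).
    rewrite rsum_plus, rsum_minus, rsum_const, S_INR. ring.
  - intros i Hi. apply Rabs_pos_eq. pose proof (inD_antitone (S m) x i m H ltac:(lia) ltac:(lia)). lra.
Qed.

(* On D the pairwise penalty is linear, so it merges with the quadratic term. *)
Lemma pen_objective_sorted n b r y z : inD n z ->
  / 2 * sqnorm n (vsub z y) + pen n b r z
  = / 2 * sqnorm n (vsub z (vsub y (vscal r (wvec n)))) + b * l1norm n z
    + (r * rsum n (fun i => y i * wvec n i) - / 2 * r ^ 2 * rsum n (fun i => wvec n i ^ 2)).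
Proof.
  intros Hz. unfold pen. rewrite pairsum_sorted by auto.
  assert (E : sqnorm n (vsub z (vsub y (vscal r (wvec n))))
              = rsum n (fun i => (z i - y i) ^ 2 + (2 * r) * (wvec n i * z i)
                                 - (2 * r) * (y i * wvec n i) + r ^ 2 * wvec n i ^ 2)).
  { unfold sqnorm, vsub, vscal. apply rsum_ext; intros; ring. }
  rewrite E, rsum_plus, rsum_minus, rsum_plus, !rsum_scal. unfold sqnorm, vsub. field.
Qed.

Section Sorted.
Variables (n : nat) (b : R) (proj : vec -> vec).
Hypothesis Hb : 0 <= b.
Hypothesis Hproj : is_proj_D n proj.

Lemma soft_proj_in v : inD n (fun i => soft b (proj v i)).
Proof. intros i Hi. apply soft_mono; auto. now apply (proj_in n proj Hproj). Qed.

(* Soft thresholding is constant on the blocks of ties of [proj v], which carry the multiplier. *)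
Lemma soft_proj_orthogonal v :
  ip n (vsub (proj v) v) (vsub (fun i => soft b (proj v i)) (proj v)) = 0.
Proof.
  set (u := proj v). unfold ip, vsub.
  rewrite (rsum_ext n _ (fun j => (-1) * (mvmul (n - 1) (mtr Bm) (proj_mult proj v) j
                                          * (soft b (u j) - u j)))).
  2: { intros j Hj. pose proof (proj_mult_stationary n proj Hproj v j Hj). fold u in H. nra. }
  rewrite rsum_scal, ip_BmT, rsum_eq0; [ring |]. intros i Hi.
  destruct (proj_mult_zero_or_active n proj Hproj v i Hi) as [-> | E]; [ring |].
  rewrite Bm_mv in * by lia. fold u in E. replace (u (S i)) with (u i) by lra. ring.
Qed.

Lemma soft_proj_minimizes v z : inD n z ->
  / 2 * sqnorm n (vsub (fun i => soft b (proj v i)) v) + b * l1norm n (fun i => soft b (proj v i))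
  <= / 2 * sqnorm n (vsub z v) + b * l1norm n z.
Proof.
  intros Hz. set (u := proj v). set (t := fun i => soft b (u i)).
  assert (D : forall w, / 2 * sqnorm n (vsub w v) + b * l1norm n w
              = rsum n (fun i => / 2 * (w i - u i) ^ 2 + b * Rabs (w i))
                + ip n (vsub u v) (vsub w u) + / 2 * sqnorm n (vsub u v)).
  { intros w. unfold sqnorm, l1norm, ip, vsub.
    rewrite <- !rsum_scal, <- !rsum_plus. apply rsum_ext; intros; field. }
  rewrite !D.
  assert (rsum n (fun i => / 2 * (t i - u i) ^ 2 + b * Rabs (t i))
          <= rsum n (fun i => / 2 * (z i - u i) ^ 2 + b * Rabs (z i)))
    by (apply rsum_le; intros; now apply soft_minimizes).
  pose proof (proj_variational_ineq n proj Hproj v z Hz).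
  pose proof (soft_proj_orthogonal v). fold u t in H0, H1. lra.
Qed.

End Sorted.

Lemma prox_sorted_formula n b r prox proj y :
  0 <= b -> 0 <= r -> is_prox_map n (pen n b r) prox -> is_proj_D n proj -> inD n y ->
  veq n (prox y) (fun i => soft b (proj (vsub y (vscal r (wvec n))) i)).
Proof.
  intros Hb Hr Hprox Hproj Hy.
  apply (prox_unique n b r prox Hb Hr Hprox). split; auto. intros z _.
  pose proof (prox_sorted n b r prox Hb Hr Hprox y Hy) as Hp.
  pose proof (proj2 (Hprox y) z I).
  rewrite (pen_objective_sorted n b r y (prox y)) in H by exact Hp.
  rewrite pen_objective_sorted by (apply soft_proj_in; auto).
  pose proof (soft_proj_minimizes n b proj Hb Hproj (vsub y (vscal r (wvec n))) (prox y) Hp). lra.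
Qed.

(** * Local behaviour of sorting and of soft thresholding *)

Definition count_ge (n : nat) (c : vec) (t : R) : R :=
  rsum n (fun i => if Rle_dec t (c i) then 1 else 0).

Lemma count_ge_lower n c t k : inD n c -> (k < n)%nat -> t <= c k -> INR (S k) <= count_ge n c t.
Proof.
  intros H Hk Ht. unfold count_ge.
  apply Rle_trans with (rsum (S k) (fun i => if Rle_dec t (c i) then 1 else 0)).
  - rewrite (rsum_ext (S k) _ (fun _ => 1)); [rewrite rsum_const; lra |].
    intros i Hi. destruct (Rle_dec t (c i)); auto.
    pose proof (inD_antitone n c i k H ltac:(lia) Hk). lra.
  - apply rsum_le_prefix; [lia |]. intros; destruct (Rle_dec t (c i)); lra.
Qed.

Lemma count_ge_upper n c t k : inD n c -> (k < n)%nat -> c k < t -> count_ge n c t <= INR k.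
Proof.
  intros H Hk Ht. unfold count_ge. rewrite (rsum_trunc n k); [| lia |].
  - rewrite <- (Rmult_1_r (INR k)), <- rsum_const.
    apply rsum_le; intros; destruct (Rle_dec t (c i)); lra.
  - intros i Hi. destruct (Rle_dec t (c i)); auto.
    pose proof (inD_antitone n c k i H ltac:(lia) ltac:(lia)). lra.
Qed.

Lemma count_ge_perm n x s t : is_perm n s -> count_ge n (vcomp x s) t = count_ge n x t.
Proof. intros Hs. apply (rsum_perm n s Hs (fun i => if Rle_dec t (x i) then 1 else 0)). Qed.

Lemma sorted_perm_unique n x s1 s2 :
  is_perm n s1 -> is_perm n s2 -> inD n (vcomp x s1) -> inD n (vcomp x s2) ->
  veq n (vcomp x s1) (vcomp x s2).
Proof.
  assert (Hle : forall sa sb, is_perm n sa -> is_perm n sb -> inD n (vcomp x sa) -> inD n (vcomp x sb) ->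
                forall k, (k < n)%nat -> vcomp x sa k <= vcomp x sb k).
  { intros sa sb Ha Hb Da Db k Hk. destruct (Rle_dec (vcomp x sa k) (vcomp x sb k)) as [| Hlt]; auto.
    pose proof (count_ge_lower n (vcomp x sa) (vcomp x sa k) k Da Hk ltac:(lra)).
    pose proof (count_ge_upper n (vcomp x sb) (vcomp x sa k) k Db Hk ltac:(lra)).
    rewrite !count_ge_perm, S_INR in * by auto. lra. }
  intros H1 H2 D1 D2 k Hk.
  pose proof (Hle s1 s2 H1 H2 D1 D2 k Hk). pose proof (Hle s2 s1 H2 H1 D2 D1 k Hk). lra.
Qed.

Lemma gap_ex n (x : vec) :
  exists d, d > 0 /\ forall i j, (i < n)%nat -> (j < n)%nat -> x i < x j -> 2 * d < x j - x i.
Proof.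
  destruct (forall_small_fin n (fun i e => forall j, (j < n)%nat -> x i < x j -> 2 * e < x j - x i))
    as [d [Hd H]].
  - intros i Hi.
    destruct (forall_small_fin n (fun j e => x i < x j -> 2 * e < x j - x i)) as [d [Hd H]].
    + intros j Hj. destruct (Rlt_dec (x i) (x j)).
      * exists ((x j - x i) / 2). split; [lra | intros; lra].
      * exists 1. split; [lra | intros; lra].
    + exists d. split; [auto |]. intros e He j Hj. now apply H.
  - exists (d / 2). split; [lra |]. intros i j Hi Hj Hx. apply (H (d / 2) ltac:(lra) i Hi j Hj Hx).
Qed.

Lemma sort_perm_locally_stable n x :
  exists d, d > 0 /\ forall dx s, is_perm n s -> norm2 n dx < d ->
    inD n (vcomp (vadd x dx) s) -> inD n (vcomp x s).
Proof.
  destruct (gap_ex n x) as [d [Hd Hg]]. exists d. split; auto.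
  intros dx s Hs Hdx HD i Hi. unfold vcomp, vadd in *.
  destruct (Rle_dec (x (s (S i))) (x (s i))) as [| Hlt]; auto.
  pose proof (Hg (s i) (s (S i)) (perm_lt n s Hs i ltac:(lia)) (perm_lt n s Hs (S i) Hi) ltac:(lra)).
  specialize (HD i Hi).
  pose proof (Rabs_le_between _ _ (coord_le_norm2 n dx (s i) (perm_lt n s Hs i ltac:(lia)))).
  pose proof (Rabs_le_between _ _ (coord_le_norm2 n dx (s (S i)) (perm_lt n s Hs (S i) Hi))).
  lra.
Qed.

Definition soft_slope (b s q : R) : Prop :=
  (Rabs s < b -> q = 0) /\ (Rabs s = b -> q = 0 \/ q = 1) /\ (Rabs s > b -> q = 1).

Ltac Rabs_cases x := let H := fresh in destruct (Rcase_abs x) as [H | H];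
  [rewrite (Rabs_left x H) in * | rewrite (Rabs_right x H) in *].

Lemma soft_local b s : b > 0 -> exists d, d > 0 /\ forall s' q,
  Rabs (s' - s) < d -> soft_slope b s' q -> soft b s' - soft b s = q * (s' - s).
Proof.
  intros Hb. destruct (Req_EM_T (Rabs s) b) as [E | E].
  - exists b. split; auto. intros s' q H [H1 [H2 H3]].
    apply Rabs_def2 in H.
    Rabs_cases s; Rabs_cases s'; unfold soft;
    destruct (Rlt_dec b s'), (Rlt_dec s' (-b)), (Rlt_dec b s), (Rlt_dec s (-b)); try lra;
    try (rewrite H3 by lra; lra); try (rewrite H1 by lra; lra);
    try (destruct (H2 ltac:(lra)) as [-> | ->]; lra);
    try (replace (s' - s) with 0 by lra; ring);
    try (destruct (Rlt_dec (- s') b); [rewrite H1 by lra; ring | replace (s' - s) with 0 by lra; ring]);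
    try (destruct (Rlt_dec s' b); [rewrite H1 by lra; ring | replace (s' - s) with 0 by lra; ring]).
  - assert (Hpos : 0 < Rabs (Rabs s - b)) by (apply Rabs_pos_lt; lra).
    exists (Rabs (Rabs s - b)). split; auto. intros s' q H [H1 [H2 H3]].
    apply Rabs_def2 in H.
    Rabs_cases s; Rabs_cases s'; try Rabs_cases (s - b); try Rabs_cases (- s - b); unfold soft;
    destruct (Rlt_dec b s'), (Rlt_dec s' (-b)), (Rlt_dec b s), (Rlt_dec s (-b)); try lra;
    try (rewrite H3 by lra; lra); try (rewrite H1 by lra; lra).
Qed.

Lemma soft_ray b s a : b > 0 ->
  exists t1 c, t1 > 0 /\ forall t, 0 < t < t1 -> soft b (s + t * a) = soft b s + t * c.
Proof.
  intros Hb.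
  assert (Small : forall m, m > 0 -> exists t1, t1 > 0 /\ forall t, 0 < t < t1 -> - m < t * a < m).
  { intros m Hm. pose proof (Rabs_pos a). exists (m / (Rabs a + 1)).
    split; [apply Rdiv_lt_0_compat; lra |]. intros t [Ht1 Ht2].
    assert (t * (Rabs a + 1) < m).
    { apply Rlt_le_trans with (m / (Rabs a + 1) * (Rabs a + 1)); [apply Rmult_lt_compat_r; lra |].
      right; field; lra. }
    pose proof (RRle_abs a). pose proof (RRle_abs (- a)). rewrite Rabs_Ropp in *. nra. }
  unfold soft. destruct (Rlt_dec b s) as [Hs1 | Hs1]; [| destruct (Rlt_dec s (-b)) as [Hs2 | Hs2]].
  - destruct (Small (s - b) ltac:(lra)) as [t1 [Ht1 H]]. exists t1, a. split; auto.
    intros t Ht. specialize (H t Ht). destruct (Rlt_dec b (s + t * a)); [ring | lra].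
  - destruct (Small (- b - s) ltac:(lra)) as [t1 [Ht1 H]]. exists t1, a. split; auto.
    intros t Ht. specialize (H t Ht).
    destruct (Rlt_dec b (s + t * a)); [lra |]. destruct (Rlt_dec (s + t * a) (-b)); [ring | lra].
  - (* at a kink the slope is read off the sign of [a] *)
    destruct (Req_EM_T s b) as [-> | Hsb]; [| destruct (Req_EM_T s (-b)) as [-> | Hsb']].
    + destruct (Rlt_dec 0 a).
      * exists 1, a. split; [lra |]. intros t Ht. destruct (Rlt_dec b (b + t * a)); [ring | nra].
      * destruct (Small (2 * b) ltac:(lra)) as [t1 [Ht1 H]]. exists t1, 0. split; auto.
        intros t Ht. specialize (H t Ht).
        destruct (Rlt_dec b (b + t * a)); [nra |]. destruct (Rlt_dec (b + t * a) (-b)); [lra | ring].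
    + destruct (Rlt_dec a 0).
      * exists 1, a. split; [lra |]. intros t Ht.
        destruct (Rlt_dec b (-b + t * a)); [nra |]. destruct (Rlt_dec (-b + t * a) (-b)); [ring | nra].
      * destruct (Small (2 * b) ltac:(lra)) as [t1 [Ht1 H]]. exists t1, 0. split; auto.
        intros t Ht. specialize (H t Ht).
        destruct (Rlt_dec b (-b + t * a)); [lra |]. destruct (Rlt_dec (-b + t * a) (-b)); [nra | ring].
    + destruct (Small (Rmin (b - s) (s + b))) as [t1 [Ht1 H]]; [apply Rmin_pos; lra |].
      exists t1, 0. split; auto. intros t Ht. specialize (H t Ht).
      pose proof (Rmin_l (b - s) (s + b)). pose proof (Rmin_r (b - s) (s + b)).
      destruct (Rlt_dec b (s + t * a)); [lra |]. destruct (Rlt_dec (s + t * a) (-b)); [lra | ring].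
Qed.

Lemma soft_locally_diag n b u : b > 0 ->
  exists d, d > 0 /\ forall u' Theta, norm2 n (vsub u' u) < d -> dB_prox_l1 n b u' Theta ->
    veq n (fun i => soft b (u' i) - soft b (u i)) (mvmul n Theta (vsub u' u)).
Proof.
  intros Hb.
  destruct (forall_small_fin n (fun i e => forall s' q, Rabs (s' - u i) <= e ->
              soft_slope b s' q -> soft b s' - soft b (u i) = q * (s' - u i))) as [d [Hd H]].
  { intros i Hi. destruct (soft_local b (u i) Hb) as [d [Hd H]].
    exists d; split; auto. intros e He s' q Hs'. apply H. lra. }
  exists d. split; auto. intros u' Theta Hu' [q [Hq HTheta]] i Hi.
  rewrite (mv_meq n n _ _ _ i HTheta Hi), mv_diagm by auto.
  apply (H _ Hu' i Hi); [apply coord_diff_le_norm2; auto | apply Hq; auto].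
Qed.

(** * Semismoothness of the proximal map *)

Section Main.
Variables (n : nat) (beta rho : R) (prox Srho proj : vec -> vec) (Psel : vec -> nat -> nat).
Hypothesis Hbeta : beta > 0.
Hypothesis Hrho : rho > 0.
Hypothesis Hprox : is_prox_map n (pen n beta rho) prox.
Hypothesis HSrho : is_prox_map n (fun x => rho * pairsum n x) Srho.
Hypothesis Hproj : is_proj_D n proj.
Hypothesis Hsel : is_sort_perm_sel n Psel.

Lemma Srho_prox : is_prox_map n (pen n 0 rho) Srho.
Proof.
  intros y. destruct (HSrho y) as [_ H]. split; auto.
  intros z _. unfold pen. specialize (H z I). lra.
Qed.

Lemma sel_perm y : is_perm n (Psel y).
Proof. apply (proj1 (Hsel y)). Qed.

Lemma sel_sorted y : inD n (vcomp y (Psel y)).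
Proof.
  intros i Hi. rewrite <- !(permm_mv n (Psel y) y (sel_perm y)) by lia. now apply (proj2 (Hsel y)).
Qed.

Lemma Srho_sorted_formula y s : is_perm n s -> inD n (vcomp y s) ->
  veq n (vcomp (Srho y) s) (proj (vsub (vcomp y s) (vscal rho (wvec n)))).
Proof.
  intros Hs Hy i Hi. rewrite (prox_perm n 0 rho Srho ltac:(lra) ltac:(lra) Srho_prox s y Hs i Hi).
  rewrite (prox_sorted_formula n 0 rho Srho proj (vcomp y s) ltac:(lra) ltac:(lra)
             Srho_prox Hproj Hy i Hi).
  apply soft_0.
Qed.

Lemma prox_soft_Srho y : veq n (prox y) (fun i => soft beta (Srho y i)).
Proof.
  intros j Hj. set (s := Psel y). destruct (sinv_spec n s (sel_perm y) j Hj) as [Hi E].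
  pose proof (prox_perm n beta rho prox ltac:(lra) ltac:(lra) Hprox s y (sel_perm y) _ Hi) as Hp.
  rewrite (prox_sorted_formula n beta rho prox proj (vcomp y s) ltac:(lra) ltac:(lra)
             Hprox Hproj (sel_sorted y) _ Hi) in Hp.
  pose proof (Srho_sorted_formula y s (sel_perm y) (sel_sorted y) _ Hi) as HS.
  unfold vcomp in *. rewrite E in *. now rewrite Hp, HS.
Qed.

Lemma Srho_nonexpansive y z : norm2 n (vsub (Srho y) (Srho z)) <= norm2 n (vsub y z).
Proof. apply (prox_nonexpansive n 0 rho Srho ltac:(lra) ltac:(lra) Srho_prox). Qed.

Definition sorted_shift (x : vec) : vec := vsub (vcomp x (Psel x)) (vscal rho (wvec n)).

Lemma sort_near x : exists d, d > 0 /\ pattern_stable n proj (sorted_shift x) d /\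
  forall dx s, norm2 n dx < d -> is_perm n s -> inD n (vcomp (vadd x dx) s) ->
    veq n (vcomp x s) (vcomp x (Psel x)) /\
    veq n (vcomp (Srho x) s) (proj (sorted_shift x)).
Proof.
  destruct (pattern_stable_ex n proj Hproj (sorted_shift x)) as [d1 Hst].
  destruct (sort_perm_locally_stable n x) as [dg [Hdg Hg]].
  assert (Hd : 0 < Rmin d1 dg) by (apply Rmin_pos; [apply Hst | auto]).
  exists (Rmin d1 dg). split; [lra |]. split.
  { apply (pattern_stable_le n proj _ d1); auto. split; [lra | apply Rmin_l]. }
  intros dx s Hdx Hs Hsorted.
  assert (Hxs : inD n (vcomp x s)) by (apply (Hg dx); auto; pose proof (Rmin_r d1 dg); lra).
  assert (Exs : veq n (vcomp x s) (vcomp x (Psel x)))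
    by (apply sorted_perm_unique; auto using sel_perm, sel_sorted).
  split; auto. intros i Hi. rewrite (Srho_sorted_formula x s Hs Hxs i Hi).
  apply (proj_ext n proj _ _ Hproj); auto. intros j Hj. unfold sorted_shift, vsub. now rewrite Exs.
Qed.

Lemma Srho_locally_Q x : exists d, d > 0 /\ forall dx Q, norm2 n dx < d ->
  Q_S n rho proj Psel (vadd x dx) Q ->
  veq n (vsub (Srho (vadd x dx)) (Srho x)) (mvmul n Q dx).
Proof.
  destruct (sort_near x) as [d [Hd [Hst Hnear]]]. exists d. split; auto.
  intros dx Q Hdx [Qh [HQh HQ]].
  set (y := vadd x dx) in *. set (s := Psel y) in *.
  assert (Hs : is_perm n s) by apply sel_perm.
  destruct (Hnear dx s Hdx Hs (sel_sorted y)) as [Exs HSx].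
  set (v := vsub (mvmul n (permm s) y) (vscal rho (wvec n))) in *.
  assert (Hv : veq n (vsub v (sorted_shift x)) (vcomp dx s)).
  { intros i Hi. unfold v, sorted_shift, vsub. rewrite permm_mv, <- Exs by auto.
    unfold vcomp, y, vadd. ring. }
  assert (Hvd : norm2 n (vsub v (sorted_shift x)) < d) by (now rewrite (norm2_ext n _ _ Hv), norm2_perm).
  destruct (Q_D_mv_proj n proj Hproj _ d v Qh Hst Hvd HQh) as [Q1 Q2].
  assert (HSy : veq n (vcomp (Srho y) s) (proj v)).
  { intros i Hi. rewrite (Srho_sorted_formula y s Hs (sel_sorted y) i Hi).
    apply (proj_ext n proj _ _ Hproj); auto. intros j Hj. unfold v, vsub. now rewrite permm_mv. }
  intros j Hj. destruct (sinv_spec n s Hs j Hj) as [Hi Ej].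
  rewrite (mv_meq n n _ _ dx j HQ Hj), mv_mmul, (permmT_mv n s _ Hs j Hj). unfold vcomp at 1.
  rewrite mv_mmul, (mv_ext n Qh _ (vsub v (sorted_shift x)))
    by (intros k Hk; rewrite permm_mv, Hv; auto).
  unfold vsub at 2. rewrite mv_minus, Q1, Q2 by auto. rewrite <- HSy, <- HSx by auto.
  unfold vsub, vcomp. now rewrite Ej.
Qed.

(* Along a ray the sorting permutation is eventually constant, so S_rho is affine there. *)
Lemma Srho_ray x d : exists t0 (a : vec), t0 > 0 /\ forall t, 0 < t < t0 ->
  veq n (Srho (vadd x (vscal t d))) (fun j => Srho x j + t * a j).
Proof.
  destruct (sort_near x) as [m [Hm [Hst Hnear]]].
  pose proof (norm2_nonneg n d).
  set (t0 := m / (2 * (norm2 n d + 1))).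
  assert (Ht0 : t0 > 0) by (unfold t0; apply Rdiv_lt_0_compat; lra).
  assert (Ht0d : norm2 n (vscal t0 d) < m).
  { rewrite norm2_scal by lra. assert (t0 * (2 * (norm2 n d + 1)) = m) by (unfold t0; field; lra). nra. }
  set (y := vadd x (vscal t0 d)). set (s := Psel y).
  assert (Hs : is_perm n s) by apply sel_perm.
  destruct (Hnear _ s Ht0d Hs (sel_sorted y)) as [Exs HSx].
  set (v := vsub (vcomp y s) (vscal rho (wvec n))).
  assert (Hseg : forall t, veq n (vcomp (vadd x (vscal t d)) s) (lin (vcomp x s) (vcomp y s) (t / t0))).
  { intros t i Hi. unfold vcomp, lin, y, vadd, vscal. field. lra. }
  assert (Hvd : norm2 n (vsub v (sorted_shift x)) < m).
  { rewrite <- (norm2_perm n s (vscal t0 d)) in Ht0d by auto. eapply Rle_lt_trans; [| exact Ht0d].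
    right. apply norm2_ext. intros i Hi. pose proof (Exs i Hi) as E.
    unfold v, sorted_shift, vsub, vcomp, vscal in *. rewrite <- E. unfold y, vadd, vscal. ring. }
  exists t0, (fun j => (proj v (sinv n s j) - proj (sorted_shift x) (sinv n s j)) / t0). split; auto.
  intros t Ht j Hj. destruct (sinv_spec n s Hs j Hj) as [Hi Ej]. set (i := sinv n s j) in *.
  assert (Ht01 : 0 <= t / t0 <= 1).
  { split; [apply Rmult_le_pos; [lra | left; apply Rinv_0_lt_compat; lra] |].
    apply Rmult_le_reg_r with t0; [lra |]. replace (t / t0 * t0) with t by (field; lra). lra. }
  assert (Hxs : inD n (vcomp x s))
    by (apply (inD_ext n (vcomp x (Psel x))); [intros k Hk; now rewrite Exs | apply sel_sorted]).
  assert (Hsorted : inD n (vcomp (vadd x (vscal t d)) s)).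
  { apply (inD_ext n (lin (vcomp x s) (vcomp y s) (t / t0))); [intros k Hk; now rewrite Hseg |].
    apply convex_D; auto using sel_sorted. }
  assert (Hline : veq n (vsub (vcomp (vadd x (vscal t d)) s) (vscal rho (wvec n)))
                        (lin (sorted_shift x) v (t / t0))).
  { intros k Hk. unfold vsub at 1. rewrite Hseg by auto. unfold lin, v, sorted_shift, vsub, vscal.
    rewrite <- (Exs k Hk). ring. }
  pose proof (Srho_sorted_formula _ s Hs Hsorted i Hi) as HSt.
  rewrite (proj_ext n proj _ _ Hproj Hline i Hi),
          (proj_affine_segment n proj Hproj _ m v _ Hst Hvd Ht01 i Hi) in HSt.
  pose proof (HSx i Hi) as HS0. unfold vcomp, lin in *. rewrite Ej in *.
  rewrite HSt, HS0. field. lra.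
Qed.

Lemma prox_dir_diff x d : dir_diff_at n prox x d.
Proof.
  destruct (Srho_ray x d) as [t0 [a [Ht0 Hray]]].
  destruct (ray_linear_fin n (fun j t => soft beta (Srho x j + t * a j) - soft beta (Srho x j)))
    as [t1 [c [Ht1 Hc]]].
  { intros j Hj. destruct (soft_ray beta (Srho x j) (a j) Hbeta) as [t1 [c [Ht1 Hc]]].
    exists t1, c. split; auto. intros t Ht. rewrite Hc by auto. ring. }
  exists c. intros eps Heps. exists (Rmin t0 t1). split; [now apply Rmin_pos |].
  intros t Ht. pose proof (Rmin_l t0 t1). pose proof (Rmin_r t0 t1).
  rewrite norm2_zero; auto. intros j Hj. unfold vsub. unfold vscal at 1.
  rewrite !prox_soft_Srho, (Hray t ltac:(lra) j Hj), (Hc j Hj t ltac:(lra)) by auto. field. lra.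
Qed.

Lemma prox_Mset_exact x : exists delta, delta > 0 /\ forall dx, norm2 n dx < delta ->
  forall V, Mset n beta rho Srho proj Psel (vadd x dx) V ->
  veq n (vsub (vsub (prox (vadd x dx)) (prox x)) (mvmul n V dx)) (fun _ => 0).
Proof.
  destruct (Srho_locally_Q x) as [dS [HdS HS]].
  destruct (soft_locally_diag n beta (Srho x) Hbeta) as [dT [HdT HT]].
  exists (Rmin dS dT). split; [now apply Rmin_pos |].
  intros dx Hdx V [_ [Theta [Q [HTheta [HQ HV]]]]] j Hj.
  pose proof (Rmin_l dS dT). pose proof (Rmin_r dS dT).
  assert (HSd : norm2 n (vsub (Srho (vadd x dx)) (Srho x)) < dT).
  { eapply Rle_lt_trans; [apply Srho_nonexpansive |].
    rewrite (norm2_ext n _ dx); [lra |]. intros i Hi. unfold vsub, vadd. ring. }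
  unfold vsub at 1 2. rewrite !prox_soft_Srho by auto.
  rewrite (HT _ Theta HSd HTheta j Hj), (mv_meq n n _ _ dx j HV Hj), mv_mmul.
  rewrite (mv_ext n Theta _ _ (HS dx Q ltac:(lra) HQ)). ring.
Qed.

End Main.

Theorem mainTheorem7 :
  forall (n : nat) (beta rho gamma : R)
    (prox Srho proj : vec -> vec) (Psel : vec -> nat -> nat),
    beta > 0 -> rho > 0 -> gamma > 0 ->
    is_prox_map n (pen n beta rho) prox ->
    is_prox_map n (fun x => rho * pairsum n x) Srho ->
    is_proj_D n proj ->
    is_sort_perm_sel n Psel ->
    (forall x d : vec, dir_diff_at n prox x d) /\
    (forall x : vec, exists C delta, C > 0 /\ delta > 0 /\
       forall dx : vec, 0 < norm2 n dx < delta ->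
       forall V : mat, Mset n beta rho Srho proj Psel (vadd x dx) V ->
         norm2 n (vsub (vsub (prox (vadd x dx)) (prox x)) (mvmul n V dx))
           <= C * Rpower (norm2 n dx) (1 + gamma)).
Proof.
  intros n beta rho gamma prox Srho proj Psel Hb Hr Hg Hp HS Hpj Hsel. split.
  - intros x d. now apply (prox_dir_diff n beta rho prox Srho proj Psel).
  - intros x. destruct (prox_Mset_exact n beta rho prox Srho proj Psel Hb Hr Hp HS Hpj Hsel x)
      as [delta [Hdelta Hexact]].
    exists 1, delta. split; [lra |]. split; auto. intros dx [Hdx0 Hdx] V HV.
    rewrite norm2_zero by now apply Hexact.
    unfold Rpower. pose proof (exp_pos ((1 + gamma) * ln (norm2 n dx))). lra.
Qed.
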